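(* In the setting below, let $n>2$ be an integer and let $(x_f,y_f,\theta_f)$ be any goal pose. The minimum travel time over all $2n\pi$-arc $LSL$ and $RSR$ paths reaching this goal pose is not smaller than the minimum travel time over all $4\pi$-arc $LSL$ and $RSR$ paths reaching it. In other words, extending the ranges of $\alpha$ and $\gamma$ beyond $[0,4\pi)$ does not reduce the minimum travel time.
   Context: Setting: a vehicle moves in the plane at unit speed with minimum turning radius $r>0$, in a steady current $(w_x,w_y)$ with speed $v_w=\sqrt{w_x^2+w_y^2}\in(0,1)$. The start pose is $(0,0,0)$ and the goal pose is $(x_f,y_f,\theta_f)$ with $\theta_f\in[0,2\pi)$. An $LSL$ path has parameters $(\alpha,\beta,\gamma)$ with $\alpha,\gamma\ge0$ and $\beta\ge0$: a left arc of angle $\alpha$ of radius $r$, a straight segment of length $\beta$, and a left arc of angle $\gamma$, in the frame moving with the current. Its travel time is $T=r(\alpha+\gamma)+\beta$. It reaches the goal iff for some $k\in\mathbb{Z}$: $\alpha+\gamma=2k\pi+\theta_f$, $x_f-w_xT=r\sin\theta_f+\beta\cos\alpha$, and $y_f-w_yT=r(1-\cos\theta_f)+\beta\sin\alpha$. An $RSR$ path is the analogous path with right arcs, with $T=r(\alpha+\gamma)+\beta$. It reaches the goal iff for some $k\in\mathbb{Z}$: $-\alpha-\gamma=2k\pi+\theta_f$, $x_f-w_xT=-r\sin\theta_f+\beta\cos\alpha$, and $y_f-w_yT=-r(1-\cos\theta_f)-\beta\sin\alpha$. For a positive integer $m$, a path is a $2m\pi$-arc path if $\alpha,\gamma\in[0,2m\pi)$.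 In particular, $4\pi$-arc paths are the case $m=2$. *)

From Stdlib Require Import Reals ZArith.
Open Scope R_scope.

Inductive path_kind : Set := LSL | RSR.

Definition travel_time (r alpha beta gamma : R) : R :=
  r * (alpha + gamma) + beta.

(* The path of kind [p] with parameters (alpha, beta, gamma), alpha,gamma,beta >= 0,
   reaches the goal pose (xf, yf, thf) in the current (wx, wy). *)
Definition reaches (p : path_kind) (r wx wy xf yf thf alpha beta gamma : R) : Prop :=
  0 <= alpha /\ 0 <= beta /\ 0 <= gamma /\
  let T := travel_time r alpha beta gamma in
  match p with
  | LSL => exists k : Z,
      alpha + gamma = 2 * IZR k * PI + thf /\
      xf - wx * T = r * sin thf + beta * cos alpha /\
      yf - wy * T = r * (1 - cos thf) + beta * sin alpha
  | RSR => exists k : Z,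
      - alpha - gamma = 2 * IZR k * PI + thf /\
      xf - wx * T = - r * sin thf + beta * cos alpha /\
      yf - wy * T = - r * (1 - cos thf) - beta * sin alpha
  end.

Definition arc_path (m : nat) (alpha gamma : R) : Prop :=
  0 <= alpha < 2 * INR m * PI /\ 0 <= gamma < 2 * INR m * PI.

(* Once the total turning alpha + gamma reaches 4 pi, the two arcs together
   contain a full loop of length 2 pi r.  Dropping the loop changes neither
   the final heading nor, in the frame of the current, the final position,
   but it shortens the travel time, so the vehicle drifts less.  A longer
   straight segment in a new direction compensates the missing drift: by the
   intermediate value theorem there is a time saving s in [0, beta + 2 pi r]
   for which the segment of length beta + 2 pi r - s covers exactly the
   displacement beta u + s w.  Repeating this brings alpha + gamma below
   4 pi without increasing the travel time. *)

From Stdlib Require Import Reals ZArith Lra Psatz.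
Open Scope R_scope.

Lemma unit_vector_angle (c d : R) :
  c ^ 2 + d ^ 2 = 1 -> exists a, 0 <= a < 2 * PI /\ cos a = c /\ sin a = d.
Proof.
  intros Hcd.
  assert (Hc : -1 <= c <= 1) by nra.
  pose proof (acos_bound c). pose proof PI_RGT_0.
  assert (Hsin : sqrt (1 - c²) = Rabs d).
  { rewrite <- sqrt_Rsqr_abs. f_equal. unfold Rsqr. lra. }
  destruct (Rle_or_lt 0 d) as [Hd | Hd].
  - exists (acos c). split; [lra |]. split; [now apply cos_acos |].
    rewrite sin_acos, Hsin, Rabs_right; lra.
  - assert (Hacos : acos c <> 0).
    { intros E. pose proof (cos_acos c Hc) as Ec. rewrite E, cos_0 in Ec. nra. }
    exists (2 * PI - acos c). split; [lra |].
    rewrite cos_minus, sin_minus, cos_2PI, sin_2PI, cos_acos, sin_acos by exact Hc.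
    rewrite Hsin, Rabs_left; lra.
Qed.

Lemma polar_angle (x y rho : R) :
  0 <= rho -> x ^ 2 + y ^ 2 = rho ^ 2 ->
  exists a, 0 <= a < 2 * PI /\ x = rho * cos a /\ y = rho * sin a.
Proof.
  intros Hrho Hxy. pose proof PI_RGT_0.
  destruct (Req_dec rho 0) as [E | Hne].
  - subst rho. exists 0. split; [lra |]. nra.
  - destruct (unit_vector_angle (x / rho) (y / rho)) as (a & Ha & Hc & Hs).
    { replace ((x / rho) ^ 2 + (y / rho) ^ 2) with ((x ^ 2 + y ^ 2) / rho ^ 2)
        by (field; exact Hne).
      rewrite Hxy. field. exact Hne. }
    exists a. split; [exact Ha |].
    rewrite Hc, Hs. split; field; exact Hne.
Qed.

(* Removing a turn of length [L] from a path with final straight segment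
   [beta] in direction [alpha] saves the time [beta + L - beta'] and hence
   shifts the end point by that time times the current [(wx, wy)]. *)
Lemma straight_absorbs_drift (wx wy beta alpha L : R) :
  0 <= beta -> 0 <= L ->
  exists alpha' beta',
    0 <= alpha' < 2 * PI /\ 0 <= beta' <= beta + L /\
    beta' * cos alpha' = beta * cos alpha + (beta + L - beta') * wx /\
    beta' * sin alpha' = beta * sin alpha + (beta + L - beta') * wy.
Proof.
  intros Hbeta HL.
  set (gap := fun s => (beta + L - s) ^ 2
    - ((beta * cos alpha + s * wx) ^ 2 + (beta * sin alpha + s * wy) ^ 2)).
  assert (Hgap0 : 0 <= gap 0).
  { unfold gap. pose proof (sin2_cos2 alpha) as E. unfold Rsqr in E. nra. }
  assert (Hgap1 : gap (beta + L) <= 0).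
  { unfold gap. replace (beta + L - (beta + L)) with 0 by ring.
    pose proof (pow2_ge_0 (beta * cos alpha + (beta + L) * wx)).
    pose proof (pow2_ge_0 (beta * sin alpha + (beta + L) * wy)). lra. }
  destruct (IVT_cor gap 0 (beta + L)) as (s & Hs & Hroot).
  { unfold gap. reg. }
  { lra. }
  { nra. }
  unfold gap in Hroot.
  destruct (polar_angle (beta * cos alpha + s * wx) (beta * sin alpha + s * wy)
              (beta + L - s)) as (a & Ha & Hx & Hy); [lra | lra |].
  exists a, (beta + L - s).
  replace (beta + L - (beta + L - s)) with s by ring.
  repeat split; lra.
Qed.

Lemma reaches_drop_loop (p : path_kind) (r wx wy xf yf thf alpha beta gamma : R) :
  0 <= r -> 4 * PI <= alpha + gamma ->
  reaches p r wx wy xf yf thf alpha beta gamma ->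
  exists alpha' beta' gamma',
    alpha' + gamma' = alpha + gamma - 2 * PI /\
    reaches p r wx wy xf yf thf alpha' beta' gamma' /\
    travel_time r alpha' beta' gamma' <= travel_time r alpha beta gamma.
Proof.
  intros Hr Hsum (Halpha & Hbeta & Hgamma & Hpos).
  pose proof PI_RGT_0.
  assert (HL : 0 <= 2 * PI * r) by nra.
  unfold reaches, travel_time in *.
  destruct p; destruct Hpos as (k & Hk & Hx & Hy).
  - destruct (straight_absorbs_drift wx wy beta alpha (2 * PI * r) Hbeta HL)
      as (a & b & Ha & Hb & Ecos & Esin).
    exists a, b, (alpha + gamma - 2 * PI - a).
    repeat split; try lra; try nra.
    exists (k - 1)%Z. rewrite minus_IZR. repeat split; nra.
  - (* a right turn sees the current mirrored in the x-axis *)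
    destruct (straight_absorbs_drift wx (- wy) beta alpha (2 * PI * r) Hbeta HL)
      as (a & b & Ha & Hb & Ecos & Esin).
    exists a, b, (alpha + gamma - 2 * PI - a).
    repeat split; try lra; try nra.
    exists (k + 1)%Z. rewrite plus_IZR. repeat split; nra.
Qed.

Lemma reaches_turning_lt_4PI (p : path_kind) (r wx wy xf yf thf : R) (m : nat) :
  0 <= r ->
  forall alpha beta gamma, alpha + gamma < 2 * INR m * PI ->
  reaches p r wx wy xf yf thf alpha beta gamma ->
  exists alpha' beta' gamma',
    alpha' + gamma' < 4 * PI /\
    reaches p r wx wy xf yf thf alpha' beta' gamma' /\
    travel_time r alpha' beta' gamma' <= travel_time r alpha beta gamma.
Proof.
  intros Hr. pose proof PI_RGT_0.
  induction m as [| m IH]; intros alpha beta gamma Hsum Hreach.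
  - destruct Hreach as (Halpha & _ & Hgamma & _). simpl in Hsum. lra.
  - destruct (Rlt_or_le (alpha + gamma) (4 * PI)) as [Hlt | Hge].
    + exists alpha, beta, gamma. split; [exact Hlt |]. split; [exact Hreach | lra].
    + destruct (reaches_drop_loop p r wx wy xf yf thf alpha beta gamma Hr Hge Hreach)
        as (a1 & b1 & g1 & Hsum1 & Hreach1 & Htime1).
      destruct (IH a1 b1 g1) as (a2 & b2 & g2 & Hsum2 & Hreach2 & Htime2);
        [rewrite S_INR in Hsum; lra | exact Hreach1 |].
      exists a2, b2, g2. split; [exact Hsum2 |]. split; [exact Hreach2 | lra].
Qed.

Theorem theorem4 :
  forall (r wx wy xf yf thf : R) (n : nat),
    0 < r ->
    0 < sqrt (wx ^ 2 + wy ^ 2) < 1 ->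
    0 <= thf < 2 * PI ->
    (2 < n)%nat ->
    forall (p : path_kind) (alpha beta gamma : R),
      arc_path n alpha gamma ->
      reaches p r wx wy xf yf thf alpha beta gamma ->
      exists (p' : path_kind) (alpha' beta' gamma' : R),
        arc_path 2 alpha' gamma' /\
        reaches p' r wx wy xf yf thf alpha' beta' gamma' /\
        travel_time r alpha' beta' gamma' <= travel_time r alpha beta gamma.
Proof.
  intros r wx wy xf yf thf n Hr _ _ _ p alpha beta gamma (Halpha & Hgamma) Hreach.
  destruct (reaches_turning_lt_4PI p r wx wy xf yf thf (2 * n) (Rlt_le _ _ Hr)
              alpha beta gamma) as (a & b & g & Hsum & Hreach' & Htime);
    [rewrite mult_INR; simpl (INR 2); lra | exact Hreach |].
  exists p, a, b, g. split; [| split; [exact Hreach' | exact Htime]].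
  destruct Hreach' as (Ha & _ & Hg & _). unfold arc_path. simpl (INR 2). lra.
Qed.
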